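(* Let $m\ge1$ and $l\ge1$ be integers. Then $D_{m,l}^{-1}B^*_{k,j}(t)\in\mathbb{Z}[t]$ for all $k,j=0,1,\dots,m$.
   Context: $v_p$ is the $p$-adic valuation. $D_{m,l}=\prod_{p\le (m+1)/2,\ p\text{ prime}}p^{\mu_p v_p((l-1)!)}$ where $\mu_p=\min_{0\le j\le m}\left(\lfloor j/p\rfloor+\lfloor (m-j)/p\rfloor\right)$. For $k=0,\dots,m$ let $l^{(k)}_h=l$ for $h\ne k$ and $l^{(k)}_k=l-1$, and $L=(m+1)l-1$. For $j,k\in\{0,\dots,m\}$ define $\sigma^{(k,j)}_i$ by $\prod_{h=0}^m(h-j-w)^{l^{(k)}_h}=\sum_{i=0}^L\sigma^{(k,j)}_iw^i$, and $B^*_{k,j}(t)=\frac{1}{(l-1)!}\sum_{i=0}^{L}t^{L-i}\,i!\,\sigma^{(k,j)}_i$. *)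

From HB Require Import structures.
From mathcomp Require Import all_boot all_order all_algebra.
Set Implicit Arguments. Unset Strict Implicit. Unset Printing Implicit Defensive.
Import Order.TTheory GRing.Theory Num.Theory.
Local Open Scope ring_scope.

Definition mu (m p : nat) : nat :=
  \big[minn/(0 %/ p + m %/ p)%N]_(j < m.+1) (j %/ p + (m - j) %/ p)%N.

(* D_{m,l} = prod_{p prime, p <= (m+1)/2} p^(mu_p * v_p((l-1)!)) ;
   p <= (m+1)/2 (real division) is written 2p <= m+1. *)
Definition Dml (m l : nat) : nat :=
  (\prod_(p < m.+2 | prime p && (2 * p <= m.+1)%N) p ^ (mu m p * logn p (l - 1)`!))%N.

Definition lk (l k h : nat) : nat := if h == k then (l - 1)%N else l.

Definition Lml (m l : nat) : nat := ((m.+1) * l - 1)%N.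

Definition sigma_poly (m l k j : nat) : {poly int} :=
  \prod_(h < m.+1) (((h : int) - (j : int))%:P - 'X) ^+ lk l k h.

Definition sigma (m l k j i : nat) : int := (sigma_poly m l k j)`_i.

Definition Bstar (m l k j : nat) : {poly rat} :=
  ((l - 1)`!)%:R^-1 *:
    \sum_(i < (Lml m l).+1) ((i`!)%:R * (sigma m l k j i)%:~R) *: 'X^(Lml m l - i).

(* For d : nat call f : {poly int} d-divisible when d divides i! f_i, i.e. the
   i-th derivative of f at 0, for every i; by the Leibniz rule a product of a
   d1-divisible and a d2-divisible polynomial is d1 d2-divisible.  For a prime p
   and p | c, the factor (c - X)^e is (e!)_p-divisible, because
   i! C(e,i) c^(e-i) = e^_i c^(e-i) and v_p(e!) <= v_p(e^_i) + (e - i).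
   Among the factors (h - j - X)^(l_h) of the polynomial defining sigma, exactly
   1 + j/p + (m-j)/p have p | h - j, and each exponent is at least l - 1, so
   i! sigma_i is divisible by ((l-1)!)_p^(1 + j/p + (m-j)/p).  This absorbs the
   p-part of (l-1)! D_{m,l}, since mu_p <= j/p + (m-j)/p. *)

From HB Require Import structures.
From mathcomp Require Import all_boot all_order all_algebra ring.
Set Implicit Arguments. Unset Strict Implicit. Unset Printing Implicit Defensive.
Import Order.TTheory GRing.Theory Num.Theory.

Lemma logn_fact_leq p n : prime p -> logn p n`! <= n.
Proof.
move=> p_pr; have p_gt1 := prime_gt1 p_pr; rewrite logn_fact //.
suff tail_bound K : \sum_(1 <= k < K.+1) n %/ p ^ k + n %/ p ^ K <= n.
  exact: leq_trans (leq_addr _ _) (tail_bound n).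
elim: K => [|K IHK]; first by rewrite big_geq // divn1.
rewrite big_nat_recr //= expnSr divnMA -addnA (leq_trans _ IHK) // leq_add2l.
set a := n %/ p ^ K; rewrite addnn -muln2 (leq_trans _ (leq_divM a p)) //.
by rewrite leq_mul2l p_gt1 orbT.
Qed.

Lemma part_fact_dvd_ffact p e i : prime p -> i <= e ->
  (e`!)`_p %| e ^_ i * p ^ (e - i).
Proof.
move=> p_pr le_ie; have p_gt0 := prime_gt0 p_pr.
rewrite p_part pfactor_dvdn ?muln_gt0 ?ffact_gt0 ?expn_gt0 ?le_ie ?p_gt0 //.
rewrite -(ffact_fact le_ie) !lognM ?ffact_gt0 ?fact_gt0 ?expn_gt0 ?p_gt0 //.
by rewrite pfactorK // leq_add2l logn_fact_leq.
Qed.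

Lemma count_dvdz_sub p m j : 0 < p -> j <= m ->
  \sum_(h < m.+1) ((p : int) %| (h%:Z - j%:Z)%R)%Z = 1 + j %/ p + (m - j) %/ p.
Proof.
move=> p_gt0 le_jm.
have count_multiples n : \sum_(0 <= h < n) (p %| h.+1) = n %/ p.
  elim: n => [|n IHn]; first by rewrite big_geq ?div0n.
  by rewrite big_nat_recr //= IHn divnS // addnC.
rewrite -(big_mkord xpredT (fun h => ((p : int) %| (h%:Z - j%:Z)%R)%Z : nat)).
rewrite (@big_cat_nat _ _ _ j) ?leqW //= big_nat_rev /= add0n.
rewrite (eq_big_nat _ _ (F2 := fun h => (p %| h.+1) : nat)); last first.
  by move=> h /andP[_ lt_hj]; rewrite -subzn // addrAC subrr add0r rpredN.
rewrite count_multiples -{2}(add0n j) big_addn subSn // big_nat_recl //.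
rewrite (eq_big_nat _ _ (F2 := fun h => (p %| h.+1) : nat)); last first.
  by move=> h _; rewrite PoszD addrK.
by rewrite count_multiples add0n subrr rpred0 addnCA addnA.
Qed.

Lemma coprime_prod_prime_powers p (I : Type) (r : seq I) (P : pred I) (q e : I -> nat) :
  prime p -> (forall i, P i -> prime (q i) /\ q i != p) ->
  coprime p (\prod_(i <- r | P i) q i ^ e i).
Proof.
move=> p_pr q_pr; elim/big_ind: _ => [|a b ca cb|i /q_pr[qi_pr qi_neq]].
- exact: coprimen1.
- by rewrite coprimeMr ca.
- by apply: coprimeXr; rewrite prime_coprime // dvdn_prime2 // eq_sym.
Qed.

Lemma logn_Dml_leq m l p : prime p -> logn p (Dml m l) <= mu m p * logn p (l - 1)`!.
Proof.
move=> p_pr; rewrite /Dml.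
have [/andP[lt_pm le_2p]|out_p] := boolP ((p < m.+2) && (2 * p <= m.+1)); last first.
  rewrite logn_coprime //; apply: coprime_prod_prime_powers => // q /andP[q_pr le_2q].
  by split=> //; apply: contraNneq out_p => <-; rewrite ltn_ord le_2q.
rewrite (bigD1 (Ordinal lt_pm)) /= ?p_pr ?le_2p //.
have coprime_rest : coprime p
    (\prod_(q < m.+2 | prime q && (2 * q <= m.+1) && (q != Ordinal lt_pm))
       q ^ (mu m q * logn q (l - 1)`!)).
  apply: coprime_prod_prime_powers => // q /andP[/andP[q_pr _] neq_qp].
  by split=> //; apply: contra neq_qp => /eqP eq_qp; apply/eqP/val_inj.
by rewrite mulnC logn_Gauss // pfactorK.
Qed.

Lemma mu_leq m p j : j <= m -> mu m p <= j %/ p + (m - j) %/ p.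
Proof.
by move=> le_jm; exact: (@bigmin_le _ nat _ _ (Ordinal (le_jm : j < m.+1))
  (fun i : 'I_m.+1 => i %/ p + (m - i) %/ p)).
Qed.

Local Open Scope ring_scope.

Definition dvd_fact_coefs (d : nat) (f : {poly int}) :=
  forall i, (d%:Z %| (i`!)%:Z * f`_i)%Z.

Lemma dvd_fact_coefs1 f : dvd_fact_coefs 1%N f.
Proof. by move=> i; rewrite dvd1z. Qed.

Lemma dvd_fact_coefs_dvdn d d' f : (d' %| d)%N ->
  dvd_fact_coefs d f -> dvd_fact_coefs d' f.
Proof. by move=> dvd_d'd df i; apply: dvdz_trans (df i); rewrite dvdzE. Qed.

Lemma dvd_fact_coefs_sum d (I : Type) (r : seq I) (P : pred I) (F : I -> {poly int}) :
  (forall i, P i -> dvd_fact_coefs d (F i)) ->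
  dvd_fact_coefs d (\sum_(i <- r | P i) F i).
Proof.
move=> dF i; rewrite coef_sum mulr_sumr; apply: rpred_sum => h Ph; exact: dF.
Qed.

Lemma dvd_fact_coefsM d1 d2 f g :
  dvd_fact_coefs d1 f -> dvd_fact_coefs d2 g -> dvd_fact_coefs (d1 * d2)%N (f * g).
Proof.
move=> df dg n; rewrite coefM mulr_sumr; apply: rpred_sum => r _.
have le_rn : (r <= n)%N by rewrite -ltnS.
rewrite -(bin_fact le_rn) !PoszM.
have -> : 'C(n, r)%:Z * (r`!%:Z * (n - r)`!%:Z) * (f`_r * g`_(n - r))
          = 'C(n, r)%:Z * ((r`!%:Z * f`_r) * ((n - r)`!%:Z * g`_(n - r))) by ring.
exact/dvdz_mull/dvdz_mul.
Qed.

Lemma dvd_fact_coefs_prod (I : Type) (r : seq I) (P : pred I) (d : I -> nat)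
    (F : I -> {poly int}) :
  (forall i, P i -> dvd_fact_coefs (d i) (F i)) ->
  dvd_fact_coefs (\prod_(i <- r | P i) d i)%N (\prod_(i <- r | P i) F i).
Proof.
by move=> dF; apply: (big_ind2 dvd_fact_coefs) => // d1 f d2 g; apply: dvd_fact_coefsM.
Qed.

Lemma dvd_fact_coefs_monomial d a i : (d%:Z %| (i`!)%:Z * a)%Z ->
  dvd_fact_coefs d (a *: 'X^i).
Proof.
by move=> dvd_a n; rewrite coefZ coefXn; case: eqP => [->|_]; rewrite ?mulr1 ?mulr0.
Qed.

Lemma dvd_fact_coefs_factor p (c : int) e : prime p -> ((p : int) %| c)%Z ->
  dvd_fact_coefs ((e`!)`_p) ((c%:P - 'X) ^+ e).
Proof.
move=> p_pr /dvdzP[c' ->]; rewrite exprDn; apply: dvd_fact_coefs_sum => i _.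
have le_ie : (i <= e)%N by rewrite -ltnS.
have -> : (c' * p)%:P ^+ (e - i) * (- 'X) ^+ i *+ 'C(e, i)
          = (((c' * p) ^+ (e - i) * (-1) ^+ i) *+ 'C(e, i)) *: 'X^i.
  rewrite -mul_polyC polyCMn mulrnAl; congr (_ *+ _).
  by rewrite [in RHS]polyCM !polyC_exp polyCM polyCN polyC1 exprNn; ring.
apply: dvd_fact_coefs_monomial.
have -> : (i`!)%:Z * ((c' * p) ^+ (e - i) * (-1) ^+ i *+ 'C(e, i))
          = (e ^_ i * p ^ (e - i))%N%:Z * c' ^+ (e - i) * (-1) ^+ i.
  by rewrite -bin_ffact -mulr_natr !PoszM -!natz natrX exprMn; ring.
by apply/dvdz_mulr/dvdz_mulr; rewrite dvdzE part_fact_dvd_ffact.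
Qed.

Lemma dvd_fact_coefs_sigma_poly p m l k j : prime p -> (j <= m)%N ->
  dvd_fact_coefs (((l - 1)`!)`_p ^ (1 + j %/ p + (m - j) %/ p))
                 (sigma_poly m l k j).
Proof.
move=> p_pr le_jm; rewrite -count_dvdz_sub ?prime_gt0 // expn_sum.
apply: dvd_fact_coefs_prod => h _.
case: ((p : int) %| h%:Z - j%:Z)%Z / boolP => [p_dvd|_]; last exact: dvd_fact_coefs1.
apply: dvd_fact_coefs_dvdn (dvd_fact_coefs_factor _ p_pr p_dvd).
have le_l1_lk : (l - 1 <= lk l k h)%N by rewrite /lk; case: eqP => // _; apply: leq_subr.
by rewrite expn1 partn_dvd ?fact_gt0 // (fact_split le_l1_lk) dvdn_mulr.
Qed.

Lemma fact_Dml_dvd_sigma m l k j i : (j <= m)%N ->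
  (((l - 1)`! * Dml m l)%N%:Z %| (i`!)%:Z * sigma m l k j i)%Z.
Proof.
move=> le_jm; have Dml_gt0 : (0 < Dml m l)%N.
  by apply: prodn_cond_gt0 => q /andP[/prime_gt0 q_gt0 _]; rewrite expn_gt0 q_gt0.
rewrite dvdzE /=; apply/dvdn_partP => [|p]; first by rewrite muln_gt0 fact_gt0.
rewrite mem_primes => /and3P[p_pr _ _].
have := dvd_fact_coefs_sigma_poly l k p_pr le_jm i; rewrite dvdzE; apply: dvdn_trans.
rewrite partnM ?fact_gt0 // -addnA expnD expn1 dvdn_mul //.
rewrite !p_part -expnM dvdn_exp2l // (leq_trans (logn_Dml_leq m l p_pr)) //.
by rewrite mulnC leq_mul2l mu_leq ?orbT.
Qed.

Lemma dvdz_divr_int (R : archiNumFieldType) (a : nat) (b : int) : (a%:Z %| b)%Z ->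
  b%:~R / a%:R \is a @Num.int R.
Proof.
move=> /dvdzP[q ->]; have [->|a_gt0] := posnP a; first by rewrite invr0 mulr0.
by rewrite intrM mulfK ?pnatr_eq0 -?lt0n ?intr_int.
Qed.

Theorem corollary6p3 (m l : nat) (hm : (1 <= m)%N) (hl : (1 <= l)%N) (k j : nat)
  (hk : (k <= m)%N) (hj : (j <= m)%N) :
  ((Dml m l)%:R^-1 *: Bstar m l k j) \is a polyOver (@Num.int rat).
Proof.
rewrite /Bstar scalerA scaler_sumr; apply/polyOverP => n.
rewrite coef_sum; apply: rpred_sum => i _; rewrite !coefZ coefXn mulrA.
apply: rpredM; last by case: (_ == _).
rewrite -invfM -natrM mulnC mulrC -[(i`!)%:R]/((i`!)%:Z%:~R) -intrM.
exact/dvdz_divr_int/fact_Dml_dvd_sigma.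
Qed.
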